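(* Consider $n\ge 2$ unit-speed aircraft with positions $p_i\in\mathbb{R}^2$ and headings $\psi_i\in(-\pi,\pi]$ obeying $\dot p_i=(\cos\psi_i,\sin\psi_i)^T$, $\dot\psi_i=u_{\psi_i}$, $i\in\{1,\dots,n\}$. Let $\mathbb{G}=(\mathcal{V},\mathcal{E})$ be a connected graph on $\mathcal{V}=\{1,\dots,n\}$ with incidence matrix $B$, and assume $\mathbb{G}$ does not contain any cycles. Fix $r>0$, desired angles $z_k^*\in\mathbb{S}^1$ for $k\in\{1,\dots,|\mathcal{E}|\}$, and a gain $k_r>0$ with $r-\pi k_r\max_{i\in\mathcal{V}}|\mathcal{N}_i|>0$. Let $\theta_i=\operatorname{atan2}(p_{i,y},p_{i,x})$ be the angle of vehicle $i$ about the origin, $\theta=(\theta_1,\dots,\theta_n)^T$, $z=B^T\theta$, and let the formation error $e_\theta\in\mathbb{T}^{|\mathcal{E}|}$ have components $e_{\theta_k}=z_k-z_k^*\in\mathbb{S}^1$, represented in $(-\pi,\pi]$. Each vehicle $i$ uses the control $^iu_r=k_rB_ie_\theta$ (where $B_i$ is the $i$-th row of $B$), sets $^ic={^iu_r}^2+2r\,{^iu_r}$, and tracks the curve $^i\mathcal{C}=\{p:\varphi(p)={^ic}\}$ (equivalently the circle of radius $r+{^iu_r}$ centered at the origin), with $\varphi(p)=p_x^2+p_y^2-r^2$, by employing the guidance steering law described in the context. Assume (Assumption 1) that each vehicle $i$ is always tracking and traveling over $^i\mathcal{C}$, so that its angular velocity about the origin is $\dot\theta_i=1/(r+{^iu_r})=1/(r+k_rB_ie_\theta)$.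 Then the origin $e_\theta=0$ of the error dynamics is locally exponentially stable.
   Context: $\mathcal{N}_i=\{j\in\mathcal{V}:(i,j)\in\mathcal{E}\}$ is the neighbor set of vehicle $i$. Edges are ordered pairs $\mathcal{E}_k=(\mathcal{E}_k^{\text{tail}},\mathcal{E}_k^{\text{head}})$; the incidence matrix $B\in\mathbb{R}^{|\mathcal{V}|\times|\mathcal{E}|}$ has entries $b_{ik}=+1$ if $i=\mathcal{E}_k^{\text{tail}}$, $-1$ if $i=\mathcal{E}_k^{\text{head}}$, $0$ otherwise. A cycle is a path (sequence of vertices with consecutive ones adjacent) starting and ending at the same vertex; connected means any two vertices are joined by a path. $\mathbb{S}^1$ is the circle group and $\mathbb{T}^m$ the $m$-torus. Guidance law: for a curve given as a level set $\{\varphi(p)=c\}$, with error $e(p)=\varphi(p)-c$, normal $n(p)=\nabla\varphi(p)$, tangent $\tau(p)=En(p)$ with $E=\begin{bmatrix}0&1\\-1&0\end{bmatrix}$, the guidance vector field is $\dot p_d=\tau-k_e e\,n$ with $k_e>0$, and the steering input is $u_\psi=-\left(E\hat{\dot p}_d\hat{\dot p}_d^TE\left((E-k_ee)H(\varphi)\dot p-k_e n^T\dot p\, n\right)\right)^TE\frac{\dot p_d}{\|\dot p_d\|^2}+k_d\hat{\dot p}^TE\hat{\dot p}_d$ with $k_d>0$, where $H$ is the Hessian and $\hat x$ denotes $x/\|x\|$. *)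

From HB Require Import structures.
From mathcomp Require Import all_boot all_order all_algebra.
From mathcomp Require Import all_classical all_reals all_analysis.
Set Implicit Arguments. Unset Strict Implicit. Unset Printing Implicit Defensive.
Import Order.TTheory GRing.Theory Num.Theory.
Local Open Scope ring_scope.

Section Graphs.
Variables (n m : nat) (E : 'I_m -> 'I_n * 'I_n).

Definition joins (k : 'I_m) (v u : 'I_n) : bool :=
  (E k == (v, u)) || (E k == (u, v)).

Definition adjacent (i j : 'I_n) : bool := [exists k, joins k i j].

Definition neighbors (i : 'I_n) : {set 'I_n} := [set j | adjacent i j].
Definition max_degree : nat := \max_(i : 'I_n) #|neighbors i|.

Definition graph_connected : Prop :=
  forall i j : 'I_n, exists s : seq 'I_n, path adjacent i s && (last i s == j).

(* walk starting at v, given as a list of (edge used, vertex reached) *)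
Fixpoint walk_from (v : 'I_n) (w : seq ('I_m * 'I_n)) : bool :=
  if w is (k, u) :: w' then joins k v u && walk_from u w' else true.

Definition has_cycle : Prop :=
  exists (v0 : 'I_n) (w : seq ('I_m * 'I_n)),
    [/\ w != [::], uniq (map fst w), walk_from v0 w & last v0 (map snd w) == v0].

Definition incidence (R : numDomainType) : 'M[R]_(n, m) :=
  \matrix_(i, k) (if i == (E k).1 then 1 else if i == (E k).2 then -1 else 0).
End Graphs.

(* representative of an angle in (-pi, pi] *)
Definition wrap_angle (R : realType) (x : R) : R :=
  x - 2 * pi * (Num.ceil ((x - pi) / (2 * pi)))%:~R.

Definition formation_error (R : realType) (n m : nat) (B : 'M[R]_(n, m))
  (zs : 'I_m -> R) (th : 'I_n -> R) (k : 'I_m) : R :=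
  wrap_angle (\sum_(j < n) B j k * th j - zs k).

Definition enorm (R : realType) (m : nat) (e : 'I_m -> R) : R :=
  Num.sqrt (\sum_(k < m) e k ^+ 2).

From HB Require Import structures.
From mathcomp Require Import all_boot all_order all_algebra.
From mathcomp Require Import all_classical all_reals all_analysis.
From mathcomp Require Import ring lra.
Set Implicit Arguments. Unset Strict Implicit. Unset Printing Implicit Defensive.
Import Order.TTheory GRing.Theory Num.Theory.
Import numFieldNormedType.Exports.
Local Open Scope ring_scope.
Local Open Scope classical_set_scope.

(* Lift the wrapped error to a continuous error e by freezing the multiple of
   2 pi that the wrapping removes at time 0, and take V = |e|^2.  Since every
   column of B sums to zero, V' = 2 sum_i y_i (1 / (r + kr y_i) - 1 / r) with
   y = B e, and each term is at most -(2 kr / 3 r^2) y_i^2 while |kr y_i| <= r/2.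
   As the graph has no cycle, B e = 0 forces e = 0, so |B e|^2 >= mu |e|^2 and
   V' <= -L V while V is small.  A first-exit argument then keeps V small
   forever, V e^(L t) is nonincreasing, and while |e| < pi the wrapped and
   unwrapped errors coincide. *)

Lemma is_derive_sum_pointwise (R : realType) n (h : 'I_n -> R -> R) (x : R)
    (dh : 'I_n -> R) :
  (forall i, is_derive x 1 (h i) (dh i)) ->
  is_derive x 1 (fun t => \sum_i h i t) (\sum_i dh i).
Proof. by move=> /is_derive_sum; rewrite fct_sumE. Qed.

Lemma sqrt_exp_decay (R : realType) (V0 V L t : R) :
  0 <= V -> V * expR (L * t) <= V0 ->
  Num.sqrt V <= Num.sqrt V0 * expR (- (L / 2 * t)).
Proof.
move=> V_ge0 decay; have V0_ge0 := le_trans (mulr_ge0 V_ge0 (expR_ge0 _)) decay.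
rewrite -(ger0_norm (expR_ge0 (- (L / 2 * t)))) -sqrtr_sqr -sqrtrM //.
apply: ler_wsqrtr; rewrite expr2 -expRD -opprD -mulrDl -splitr expRN.
by rewrite ler_pdivlMr ?expR_gt0.
Qed.

Lemma sqrtr_lt_sqr (R : rcfType) (x d : R) : 0 < d -> (Num.sqrt x < d) = (x < d ^+ 2).
Proof. by move=> d_gt0; rewrite -ltr_sqrt ?exprn_gt0 // sqrtr_sqr gtr0_norm. Qed.

Section LyapunovComparison.
Variables (R : realType) (V dV : R -> R) (L d : R).
Hypothesis V_cont : {within `[0, +oo[, continuous V}.
Hypothesis V_deriv : forall t : R, 0 < t -> is_derive t 1 V (dV t).
Hypothesis dV_le : forall t : R, 0 < t -> V t < d -> dV t <= - L * V t.

Let W (t : R) := V t * expR (L * t).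

Lemma weighted_cont : {within `[0, +oo[, continuous W}.
Proof.
have [_ V_right] := (continuous_within_itvcyP 0 V).1 V_cont.
apply/continuous_within_itvcyP; split.
  move=> x; rewrite in_itv /= andbT => /V_deriv dVx.
  have : derivable W x 1 by apply: ex_derive.
  by move=> /derivable1_diffP/differentiable_continuous.
apply: cvgM => //; apply: cvg_at_right_filter.
have : derivable (fun t : R => expR (L * t)) 0 1 by [].
by move=> /derivable1_diffP/differentiable_continuous.
Qed.

Lemma weighted_le (a b : R) : 0 <= a -> a <= b ->
  (forall t, a < t < b -> V t < d) -> W b <= W a.
Proof.
move=> a_ge0; rewrite le_eqVlt => /predU1P[-> //|ab] V_lt.
pose dW t := expR (L * t) * (dV t + L * V t).
have W_deriv t : t \in `]a, b[%R -> is_derive t 1 W (dW t).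
  rewrite in_itv /= => /andP[at_ tb].
  have := V_deriv (le_lt_trans a_ge0 at_) => dVt.
  by apply: is_derive_eq; rewrite /dW /GRing.scale /= mulr1; ring.
have W_cont_ab : {within `[a, b], continuous W}.
  apply: continuous_subspaceW weighted_cont => x /=.
  by rewrite !in_itv /= andbT => /andP[/(le_trans a_ge0)].
have [c] := MVT ab W_deriv W_cont_ab.
rewrite in_itv /= => /andP[ac cb] Wba.
rewrite -subr_le0 Wba; apply: mulr_le0_ge0; last by rewrite subr_ge0 ltW.
apply: mulr_ge0_le0; first exact: expR_ge0.
have := dV_le (le_lt_trans a_ge0 ac) (V_lt c (introT andP (conj ac cb))).
by rewrite mulNr; lra.
Qed.

Hypothesis V_ge0 : forall t, 0 <= V t.
Hypothesis V0_lt : V 0 < d.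
Hypothesis L_ge0 : 0 <= L.

Lemma le_weighted t : 0 <= t -> V t <= W t.
Proof. by move=> t0; rewrite ler_peMr // -expR0 ler_expR mulr_ge0. Qed.

(* At the first time t2 where V would reach d, weighted_le gives V t2 <= V 0 < d,
   and by continuity V stays below d a little after t2. *)
Lemma lyapunov_lt t : 0 <= t -> V t < d.
Proof.
move=> t0; apply: contrapT => /negP; rewrite -leNgt => d_le_Vt.
pose S := [set s : R | 0 <= s /\ d <= V s].
have S0 : S !=set0 by exists t.
have Slb : has_lbound S by exists 0 => x [].
set t2 := inf S.
have t2_ge0 : 0 <= t2 by apply: lb_le_inf => // x [].
have below s : 0 <= s < t2 -> V s < d.
  move=> /andP[s0 st2]; rewrite ltNge; apply/negP => ds.
  by move: st2; rewrite ltNge (ge_inf Slb (conj s0 ds)).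
have Vt2 : V t2 < d.
  apply: le_lt_trans V0_lt; apply: le_trans (le_weighted t2_ge0) _.
  have := @weighted_le 0 t2 (lexx 0) t2_ge0.
  rewrite /W mulr0 expR0 mulr1; apply => s /andP[s0 st2].
  by apply: below; rewrite st2 ltW.
have [V_in V_right] := (continuous_within_itvcyP 0 V).1 V_cont.
have near_t2 : \forall s \near t2^'+, V s < d.
  apply: (@cvgr_lt _ _ _ _ _ (V t2)) => //.
  case: (ltgtP 0 t2) t2_ge0 => // [t2_gt0 _|<- _]; last exact: V_right.
  by apply: cvg_at_right_filter; apply: V_in; rewrite in_itv /= andbT.
apply: ((not_near_at_rightP t2 (fun s => V s < d)).2 _ near_t2) => e.
have /(inf_lt S0) [s [s0 ds] s_lt] : inf S < t2 + e%:num by rewrite ltrDl.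
have := ge_inf Slb (conj s0 ds); rewrite -/t2 le_eqVlt => /predU1P[t2s|t2s].
  by move: ds; rewrite -t2s leNgt Vt2.
by exists s; [rewrite t2s s_lt | apply/negP; rewrite -leNgt].
Qed.

Lemma lyapunov_exp_decay t : 0 <= t -> V t * expR (L * t) <= V 0.
Proof.
move=> t0; have := @weighted_le 0 t (lexx 0) t0.
rewrite /W mulr0 expR0 mulr1; apply => s /andP[s0 _].
exact/lyapunov_lt/ltW.
Qed.

End LyapunovComparison.

Lemma wrap_angle_shift (R : realType) (x : R) (N : int) :
  - pi < x - 2 * pi * N%:~R <= pi -> wrap_angle x = x - 2 * pi * N%:~R.
Proof.
move=> /andP[lo hi]; rewrite /wrap_angle (@ceil_def _ _ N) //.
have pi_gt0 : (0 : R) < pi := pi_gt0 R.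
rewrite ltr_pdivlMr ?ler_pdivrMr ?mulr_gt0 // intrB.
by apply/andP; split; nra.
Qed.

Section Forest.
Variables (n m : nat) (E : 'I_m -> 'I_n * 'I_n).

Lemma walk_from_cat v w1 w2 : walk_from E v (w1 ++ w2) =
  walk_from E v w1 && walk_from E (last v (map snd w1)) w2.
Proof. by elim: w1 v => [|[k u] w1 IH] v //=; rewrite IH andbA. Qed.

Definition incident (k : 'I_m) (u : 'I_n) := (u == (E k).1) || (u == (E k).2).

Lemma joins_incident k x u : joins E k x u -> incident k x /\ incident k u.
Proof. by rewrite /joins /incident => /orP[] /eqP -> /=; rewrite !eqxx ?orbT. Qed.

Lemma joins_other_end k u : incident k u ->
  joins E k u (if u == (E k).1 then (E k).2 else (E k).1).
Proof.
rewrite /incident /joins; case: eqP => [->|_] /= => [_|/eqP->];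
  by rewrite -surjective_pairing eqxx ?orbT.
Qed.

Lemma incident_joins k y x u : joins E k y x -> incident k u -> (u == y) || (u == x).
Proof. by rewrite /joins /incident => /orP[] /eqP -> //=; rewrite orbC. Qed.

Lemma revisited_edge_cycle v w k u k' :
  walk_from E v (rcons w (k, u)) -> uniq (map fst (rcons w (k, u))) ->
  k' \in map fst w -> incident k' u -> has_cycle E.
Proof.
move=> walk_w uniq_w /mapP[[k'' x] /= kx_w ->{k'}]; move: walk_w uniq_w.
case/splitPr: kx_w => w1 w2; rewrite rcons_cat rcons_cons walk_from_cat map_cat cat_uniq.
set y := last v _; set c := rcons w2 (k, u).
move=> /andP[_ walk_kc] /and3P[_ _ uniq_kc] inc_u.
have /andP[xy walk_c] := walk_kc.
have last_c : last x (map snd c) = u by rewrite map_rcons last_rcons.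
case/orP: (incident_joins xy inc_u) => /eqP u_eq.
- exists y, ((k'', x) :: c); split => //.
  by rewrite /= last_c u_eq.
- exists x, c; split => //; first by rewrite /c; case: (w2).
    by case/andP: uniq_kc.
  by rewrite last_c u_eq.
Qed.

Lemma incidence_norm_le1 (R : numDomainType) j k :
  `|incidence E R j k| <= 1.
Proof. by rewrite mxE; do 2?case: ifP => _; rewrite ?normrN ?normr1 ?normr0. Qed.

Hypothesis acyclic : ~ has_cycle E.

Lemma edge_ends_neq k : (E k).1 != (E k).2.
Proof.
apply/negP => /eqP loop; apply: acyclic.
exists (E k).1, [:: (k, (E k).1)]; split => //=.
by rewrite andbT /joins {2}loop -surjective_pairing eqxx.
Qed.

Section IncidenceKernel.
Variables (R : numDomainType) (e : 'I_m -> R).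
Hypothesis e_ker : forall i, \sum_k incidence E R i k * e k = 0.

Lemma kernel_support_branch u k : e k != 0 -> incident k u ->
  exists k', [/\ k' != k, e k' != 0 & incident k' u].
Proof.
move=> ek inc_u; apply: contrapT => no_branch.
have : \sum_k' incidence E R u k' * e k' = incidence E R u k * e k.
  rewrite (bigD1 k) //= big1 ?addr0 // => k' k'k.
  have [->|ek'] := eqVneq (e k') 0; first by rewrite mulr0.
  have [inc'|] := boolP (incident k' u); first by exfalso; apply: no_branch; exists k'.
  by rewrite mxE /incident negb_or => /andP[/negbTE -> /negbTE ->]; rewrite mul0r.
rewrite e_ker => /esym/eqP; rewrite mulf_eq0 (negbTE ek) orbF mxE.
by move: inc_u; rewrite /incident; case: (u == _) => /= [_|->]; rewrite ?oppr_eq0 oner_eq0.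
Qed.

Definition support_trail v w :=
  [&& walk_from E v w, uniq (map fst w) & all (fun p => e p.1 != 0) w].

Lemma support_trail_grow v w : support_trail v w -> w != [::] ->
  exists w', support_trail v w' /\ size w' = (size w).+1.
Proof.
case/lastP: w => // w [k u] /and3P[walk_w uniq_w supp_w] _.
have ek : e k != 0 by move: supp_w; rewrite all_rcons => /andP[].
have inc_u : incident k u.
  by move: walk_w; rewrite -cats1 walk_from_cat /= andbT => /andP[_ /joins_incident[]].
have [k' [k'k ek' inc_u']] := kernel_support_branch ek inc_u.
have [k'_w|k'_nw] := boolP (k' \in map fst (rcons w (k, u))).
  move: k'_w; rewrite map_rcons mem_rcons inE (negbTE k'k) /= => k'_w.
  by case: acyclic; apply: revisited_edge_cycle walk_w uniq_w k'_w inc_u'.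
exists (rcons (rcons w (k, u)) (k', if u == (E k').1 then (E k').2 else (E k').1)).
split; last by rewrite size_rcons.
apply/and3P; split.
- by rewrite -cats1 walk_from_cat walk_w map_rcons last_rcons /= andbT joins_other_end.
- by rewrite map_rcons rcons_uniq k'_nw uniq_w.
- by rewrite all_rcons supp_w ek'.
Qed.

Lemma support_trail_long k0 : e k0 != 0 ->
  forall N, exists v w, support_trail v w /\ size w = N.+1.
Proof.
move=> ek0; elim=> [|N [v [w [tw sw]]]].
  exists (E k0).1, [:: (k0, (E k0).2)].
  by rewrite /support_trail /= /joins -surjective_pairing eqxx ek0.
have [|w' [tw' sw']] := support_trail_grow tw; first by rewrite -size_eq0 sw.
by exists v, w'; rewrite sw' sw.
Qed.

Lemma incidence_ker0 k : e k = 0.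
Proof.
apply/eqP; apply: contraT => ek.
(* otherwise there would be a trail with m + 1 pairwise distinct edges *)
have [v [w [/and3P[_ uniq_w _] size_w]]] := support_trail_long ek m.
have := max_card (mem (map fst w)).
by rewrite (card_uniqP uniq_w) size_map size_w card_ord ltnn.
Qed.

End IncidenceKernel.

Lemma incidence_col_sum (R : numDomainType) k : \sum_j incidence E R j k = 0.
Proof.
rewrite (bigD1 (E k).1) //= (bigD1 (E k).2) 1?eq_sym ?edge_ends_neq //= big1 ?addr0.
  by rewrite !mxE eqxx eq_sym (negbTE (edge_ends_neq k)) eqxx subrr.
by move=> j /andP[j2 j1]; rewrite mxE (negbTE j1) (negbTE j2).
Qed.

End Forest.

Section Coercivity.
Variables (R : rcfType) (n m : nat) (A : 'M[R]_(n, m)).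
Hypothesis A_ker0 : forall e : 'I_m -> R,
  (forall i, \sum_k A i k * e k = 0) -> forall k, e k = 0.

Lemma ker0_left_inverse : exists M : 'M[R]_(n, m), forall (e : 'I_m -> R) k,
  e k = \sum_j (\sum_k' A j k' * e k') * M j k.
Proof.
have : row_free A^T.
  rewrite -kermx_eq0; apply/rowV0P => v /sub_kermxP vA.
  apply/rowP => k; rewrite mxE; apply: (@A_ker0 (v 0)) => i.
  have := congr1 (fun N : 'rV[R]_n => N 0 i) vA; rewrite /= !mxE => vAi.
  by rewrite -[RHS]vAi; apply: eq_bigr => k' _; rewrite mxE mulrC.
case/row_freeP => M AM; exists M => e k.
have := congr1 (fun N : 'M[R]_m => ((\row_k e k) *m N) 0 k) AM.
rewrite /= mulmxA mulmx1 mxE => {1}<-; rewrite mxE.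
apply: eq_bigr => j _; congr (_ * _).
by rewrite !mxE; apply: eq_bigr => k' _; rewrite !mxE mulrC.
Qed.

Lemma ker0_sumsq_lbound : exists2 mu : R, 0 < mu & forall e : 'I_m -> R,
  mu * \sum_k e k ^+ 2 <= \sum_i (\sum_k A i k * e k) ^+ 2.
Proof.
have [M eM] := ker0_left_inverse.
pose K := \sum_k (\sum_j `|M j k|) ^+ 2.
have K_ge0 : 0 <= K by rewrite sumr_ge0 // => k _; rewrite sqr_ge0.
exists (K + 1)^-1; first by rewrite invr_gt0 ltr_wpDl.
move=> e; set y := fun i => \sum_k A i k * e k; set Y := \sum_i y i ^+ 2.
have Y_ge0 : 0 <= Y by rewrite sumr_ge0 // => i _; rewrite sqr_ge0.
have y_le j : `|y j| <= Num.sqrt Y.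
  rewrite -sqrtr_sqr ler_wsqrtr // /Y (bigD1 j) //= lerDl.
  by rewrite sumr_ge0 // => i _; rewrite sqr_ge0.
have e_le k : e k ^+ 2 <= Y * (\sum_j `|M j k|) ^+ 2.
  have le_e : `|e k| <= Num.sqrt Y * \sum_j `|M j k|.
    rewrite eM mulr_sumr; apply: le_trans (ler_norm_sum _ _ _) _.
    by apply: ler_sum => j _; rewrite normrM ler_wpM2r //; apply: y_le.
  apply: le_trans (_ : (Num.sqrt Y * \sum_j `|M j k|) ^+ 2 <= _).
    rewrite -real_normK ?num_real // !expr2.
    by apply: ler_pM; rewrite ?normr_ge0.
  by rewrite exprMn sqr_sqrtr.
rewrite ler_pdivrMl ?ltr_wpDl // mulrC.
apply: le_trans (_ : Y * K <= _); first by rewrite /K mulr_sumr ler_sum.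
by rewrite ler_wpM2l // lerDl.
Qed.

End Coercivity.

Lemma recip_shift_le (R : realFieldType) (r kr y : R) : 0 < r -> 0 < kr ->
  `|kr * y| <= r / 2 ->
  y * (1 / (r + kr * y) - 1 / r) <= - (2 * kr / (3 * r ^+ 2)) * y ^+ 2.
Proof.
move=> r_gt0 kr_gt0; rewrite ler_norml => /andP[lo hi].
have s_gt0 : 0 < r + kr * y by lra.
have -> : y * (1 / (r + kr * y) - 1 / r) = - (kr * y ^+ 2) / (r * (r + kr * y)).
  by field; rewrite !gt_eqF.
have -> : - (2 * kr / (3 * r ^+ 2)) * y ^+ 2 = - (2 * kr * y ^+ 2) / (3 * r ^+ 2).
  by field; rewrite gt_eqF.
rewrite ler_pdivrMr ?mulr_gt0 // mulrAC ler_pdivlMr ?mulr_gt0 ?exprn_gt0 //.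
have kyr_ge0 := mulr_ge0 (mulr_ge0 (ltW kr_gt0) (sqr_ge0 y)) (ltW r_gt0).
have ky_le : 2 * (kr * y) - r <= 0 by lra.
have := mulr_ge0_le0 kyr_ge0 ky_le; nra.
Qed.

Lemma lyapunov_deriv_le (R : realFieldType) n m (B : 'M[R]_(n, m)) (r kr mu : R)
    (e : 'I_m -> R) :
  0 < r -> 0 < kr -> (forall k, \sum_j B j k = 0) ->
  mu * \sum_k e k ^+ 2 <= \sum_j (\sum_k B j k * e k) ^+ 2 ->
  (forall j, `|kr * \sum_k B j k * e k| <= r / 2) ->
  \sum_k 2 * e k * (\sum_j B j k * (1 / (r + kr * \sum_k' B j k' * e k')))
    <= - (4 * kr * mu / (3 * r ^+ 2)) * \sum_k e k ^+ 2.
Proof.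
move=> r_gt0 kr_gt0 B_col_sum B_coercive small.
set y := fun j => \sum_k B j k * e k; set f := fun j => 1 / (r + kr * y j).
set c := 2 * kr / (3 * r ^+ 2).
have c_ge0 : 0 <= c by rewrite ltW // divr_gt0 ?mulr_gt0 ?exprn_gt0.
have y_sum : \sum_j y j = 0.
  rewrite /y exchange_big big1 //= => k _.
  by rewrite -mulr_suml B_col_sum mul0r.
have -> : \sum_k 2 * e k * (\sum_j B j k * f j) = 2 * \sum_j y j * (f j - 1 / r).
  under [in RHS]eq_bigr do rewrite mulrBr.
  rewrite sumrB -mulr_suml y_sum mul0r subr0 mulr_sumr.
  under eq_bigr do rewrite mulr_sumr.
  rewrite exchange_big; apply: eq_bigr => j _ /=.
  by rewrite /y !mulr_suml mulr_sumr; apply: eq_bigr => k _; ring.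
apply: le_trans (_ : 2 * \sum_j (- c * y j ^+ 2) <= _).
  rewrite ler_pM2l //; apply: ler_sum => j _.
  exact: recip_shift_le r_gt0 kr_gt0 (small j).
have := ler_wpM2l c_ge0 B_coercive.
rewrite -mulr_sumr (_ : 4 * kr * mu / (3 * r ^+ 2) = 2 * c * mu) /c; last by ring.
set S := \sum_k _; set Y := \sum_j _; lra.
Qed.

Section FormationErrorDynamics.
Variables (R : realType) (n m : nat) (B : 'M[R]_(n, m)) (zs : 'I_m -> R).
Variable th : 'I_n -> R -> R.

Let z k t := \sum_j B j k * th j t - zs k.

(* wrap_angle picks its multiple of 2 pi at each time; freezing the one chosen
   at time 0 gives a lift of the error that is as smooth as th. *)
Definition unwrapped_error k t :=
  z k t - 2 * pi * (Num.ceil ((z k 0 - pi) / (2 * pi)))%:~R.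

Definition lyap t := \sum_k unwrapped_error k t ^+ 2.

Lemma lyap_ge0 t : 0 <= lyap t.
Proof. by rewrite sumr_ge0 // => k _; rewrite sqr_ge0. Qed.

Lemma unwrapped_error_le t k : `|unwrapped_error k t| <= Num.sqrt (lyap t).
Proof.
rewrite -sqrtr_sqr ler_wsqrtr // /lyap (bigD1 k) //= lerDl.
by rewrite sumr_ge0 // => i _; rewrite sqr_ge0.
Qed.

Lemma formation_error_unwrapped t k : `|unwrapped_error k t| < pi ->
  formation_error B zs (fun j => th j t) k = unwrapped_error k t.
Proof. by rewrite ltr_norml => /andP[lo hi]; apply: wrap_angle_shift; rewrite lo ltW. Qed.

Lemma enorm_formation_error t : Num.sqrt (lyap t) < pi ->
  enorm (formation_error B zs (fun j => th j t)) = Num.sqrt (lyap t).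
Proof.
move=> small; rewrite /enorm /lyap; congr Num.sqrt; apply: eq_bigr => k _.
by rewrite formation_error_unwrapped // (le_lt_trans (unwrapped_error_le t k)).
Qed.

Lemma enorm_formation_error0 :
  enorm (formation_error B zs (fun j => th j 0)) = Num.sqrt (lyap 0).
Proof. by []. Qed.

Lemma lyap_deriv (t : R) (dth : 'I_n -> R) : (forall i, is_derive t 1 (th i) (dth i)) ->
  is_derive t 1 lyap (\sum_k 2 * unwrapped_error k t * \sum_j B j k * dth j).
Proof.
move=> th_t; apply: is_derive_sum_pointwise => k.
have dz : is_derive t 1 (fun s => \sum_j B j k * th j s) (\sum_j B j k * dth j).
  exact: is_derive_sum_pointwise.
by apply: is_derive_eq; rewrite /GRing.scale /=; ring.
Qed.

Lemma lyap_cont (dth : 'I_n -> R -> R) :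
  (forall i, th i x @[x --> (0:R)^'+] --> th i 0) ->
  (forall i (t : R), 0 < t -> is_derive t 1 (th i) (dth i t)) ->
  {within `[0, +oo[, continuous lyap}.
Proof.
move=> th_cont0 th_deriv; apply/continuous_within_itvcyP; split.
  move=> t; rewrite in_itv /= andbT => t_gt0.
  have := lyap_deriv (fun i => th_deriv i t t_gt0) => lyap_t.
  have : derivable lyap t 1 by apply: ex_derive.
  by move=> /derivable1_diffP/differentiable_continuous.
apply: (cvg_big add_continuous) => k _.
rewrite expr2; under eq_cvg do rewrite expr2.
have z_cvg : unwrapped_error k x @[x --> 0^'+] --> unwrapped_error k 0.
  apply: cvgB; last exact: cvg_cst.
  apply: cvgB; last exact: cvg_cst.
  by apply: (cvg_big add_continuous) => j _; apply: cvgM; [exact: cvg_cst|].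
exact: (cvgM z_cvg z_cvg).
Qed.

End FormationErrorDynamics.

Section ClosedLoop.
Variables (R : realType) (n m : nat) (B : 'M[R]_(n, m)) (zs : 'I_m -> R).
Variables (r kr mu delta : R).
Hypotheses (r_gt0 : 0 < r) (kr_gt0 : 0 < kr) (delta_gt0 : 0 < delta).
Hypothesis B_col_sum : forall k, \sum_j B j k = 0.
Hypothesis B_le1 : forall j k, `|B j k| <= 1.
Hypothesis B_coercive : forall e : 'I_m -> R,
  mu * \sum_k e k ^+ 2 <= \sum_j (\sum_k B j k * e k) ^+ 2.
Hypothesis delta_le_pi : delta <= pi.
Hypothesis delta_small : kr * (m%:R * delta) <= r / 2.

Lemma closed_loop_lyap_deriv_le (th : 'I_n -> R -> R) t :
  lyap B zs th t < delta ^+ 2 ->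
  \sum_k 2 * unwrapped_error B zs th k t * \sum_j B j k *
      (1 / (r + kr * \sum_k' B j k' * formation_error B zs (fun i => th i t) k'))
    <= - (4 * kr * mu / (3 * r ^+ 2)) * lyap B zs th t.
Proof.
move=> small; set e := unwrapped_error B zs th ^~ t.
have e_lt k : `|e k| < delta.
  by apply: le_lt_trans (unwrapped_error_le B zs th t k) _; rewrite sqrtr_lt_sqr.
have -> : formation_error B zs (fun i => th i t) = e.
  apply/funext => k; rewrite formation_error_unwrapped //.
  exact: lt_le_trans (e_lt k) delta_le_pi.
apply: lyapunov_deriv_le => // j.
rewrite normrM gtr0_norm //; apply: le_trans delta_small; rewrite ler_pM2l //.
apply: le_trans (ler_norm_sum _ _ _) _.
apply: le_trans (_ : \sum_(k < m) delta <= _); last by rewrite sumr_const card_ord mulr_natl.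
apply: ler_sum => k _; rewrite normrM -[delta]mul1r.
by apply: ler_pM; [exact: normr_ge0 | exact: normr_ge0 | exact: B_le1 | exact: ltW (e_lt k)].
Qed.

End ClosedLoop.

Theorem theorem2 (R : realType) (n m : nat) (E : 'I_m -> 'I_n * 'I_n)
  (r kr : R) (zs : 'I_m -> R) :
  (2 <= n)%N ->
  graph_connected E ->
  ~ has_cycle E ->
  0 < r -> 0 < kr ->
  0 < r - pi * kr * (max_degree E)%:R ->
  let B : 'M[R]_(n, m) := @incidence n m E R in
  exists delta c lambda : R,
    [/\ 0 < delta, 0 < c, 0 < lambda &
      forall th : 'I_n -> R -> R,
        (forall i, th i x @[x --> (0:R)^'+] --> (th i 0 : R)) ->
        (forall i (t : R), 0 < t ->
           is_derive t 1 (th i)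
             (1 / (r + kr * \sum_(k < m) B i k *
                     formation_error B zs (fun j => th j t) k))) ->
        enorm (formation_error B zs (fun j => th j 0)) < delta ->
        forall t : R, 0 <= t ->
          enorm (formation_error B zs (fun j => th j t))
            <= c * enorm (formation_error B zs (fun j => th j 0))
                 * expR (- (lambda * t))].
Proof.
move=> _ _ acyclic r_gt0 kr_gt0 _ B.
have [mu mu_gt0 B_coercive] := ker0_sumsq_lbound (@incidence_ker0 _ _ _ acyclic R).
pose delta := Num.min pi (r / (2 * kr * (m%:R + 1))).
have delta_gt0 : 0 < delta by rewrite lt_min pi_gt0 divr_gt0 ?mulr_gt0 ?ltr_wpDl.
have delta_le_pi : delta <= pi by rewrite ge_min lexx.
have delta_small : kr * (m%:R * delta) <= r / 2.
  have : delta <= r / (2 * kr * (m%:R + 1)) by rewrite ge_min lexx orbT.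
  rewrite ler_pdivlMr ?mulr_gt0 ?ltr_wpDl // => le_delta.
  by have := mulr_gt0 kr_gt0 delta_gt0; lra.
pose L := 4 * kr * mu / (3 * r ^+ 2).
have L_gt0 : 0 < L by rewrite divr_gt0 ?mulr_gt0 ?exprn_gt0.
exists delta, 1, (L / 2); split => //; first by rewrite divr_gt0.
move=> th th_cont0 th_deriv e0_lt t t_ge0.
have V0_lt : lyap B zs th 0 < delta ^+ 2 by rewrite -sqrtr_lt_sqr // -enorm_formation_error0.
pose dV s := \sum_k 2 * unwrapped_error B zs th k s * \sum_j B j k *
  (1 / (r + kr * \sum_k' B j k' * formation_error B zs (fun i => th i s) k')).
have V_deriv (s : R) : 0 < s -> is_derive s 1 (lyap B zs th) (dV s).
  by move=> s_gt0; apply: lyap_deriv => i; exact: th_deriv.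
have dV_le (s : R) : 0 < s -> lyap B zs th s < delta ^+ 2 -> dV s <= - L * lyap B zs th s.
  move=> _; apply: closed_loop_lyap_deriv_le => //.
  - exact: incidence_col_sum.
  - exact: incidence_norm_le1.
have V_cont : {within `[0, +oo[, continuous lyap B zs th}.
  exact: lyap_cont th_cont0 th_deriv.
have V_ge0 := lyap_ge0 B zs th.
have Vt_lt := lyapunov_lt V_cont V_deriv dV_le V_ge0 V0_lt (ltW L_gt0) t_ge0.
rewrite enorm_formation_error ?enorm_formation_error0 ?mul1r; last first.
  by apply: lt_le_trans delta_le_pi; rewrite sqrtr_lt_sqr.
exact: sqrt_exp_decay (lyapunov_exp_decay V_cont V_deriv dV_le V_ge0 V0_lt (ltW L_gt0) t_ge0).
Qed.
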